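(* Let $t$ be a term and $\vec x=x_1\dots x_n$ a vector of pairwise distinct program variables. If $$\vec x(1)=\vec x(2)\ \vdash\ \mathrm{wp}\,[1:t,\ 2:(t;t)]\,\{\vec x(1)=\vec x(2)\}$$ and $t$ is projectable from every store (for every store $s$ there exist $v,s'$ with $t,s\Downarrow v,s'$), then $$\vec x(1)=\vec x(2)\ \vdash\ \mathrm{wp}\,[1:t,2:t]\,\{\vec x(1)=\vec x(2)\}.$$ Moreover, the projectability hypothesis cannot be dropped: there exist a term $t$ and a vector $\vec x$ satisfying the first entailment but not the conclusion.
   Context: Setting. $\mathrm{Val}=\mathbb{Z}$; $\mathrm{PVar}$ is a countably infinite set of program variables; a store is a function $s:\mathrm{PVar}\to\mathrm{Val}$; indices are $\mathrm{Idx}=\mathbb{N}$. Terms of a first-order imperative language are generated by $t ::= v \mid x \mid * \mid t\oplus t \mid \mathtt{skip}\mid x:=t \mid t;t \mid \mathtt{if}\ t\ \mathtt{then}\ t\ \mathtt{else}\ t \mid \mathtt{while}\ t\ \mathtt{do}\ t$ ($\oplus$ primitive operations such as $+,-,<$), with a nondeterministic big-step semantics $t,s\Downarrow v,s'$ ($t$ run from $s$ may terminate with return value $v$ and final store $s'$; $*$ returns an arbitrary integer; nonterminating runs yield no judgment; $t_1;t_2,s\Downarrow v,s''$ iff $t_1,s\Downarrow\_,s'$ and $t_2,s'\Downarrow \_,s''$ for some $s'$). A hyper-term is a finitely supported partial map from $\mathrm{Idx}$ to terms, written $[i_1:t_1,\dots,i_n:t_n]$; a hyper-store is a total function $\mathbf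 s:\mathrm{Idx}\to\mathrm{Store}$. $\mathbf t,\mathbf s\Downarrow\mathbf v,\mathbf s'$ holds iff for every $i\in\mathrm{supp}(\mathbf t)$, $\mathbf t(i),\mathbf s(i)\Downarrow\mathbf v(i),\mathbf s'(i)$, and for every $i\notin\mathrm{supp}(\mathbf t)$, $\mathbf s'(i)=\mathbf s(i)$. A hyper-assertion is a predicate on hyper-stores; $P\vdash R$ means $\forall\mathbf s.\ P(\mathbf s)\Rightarrow R(\mathbf s)$. $\mathrm{wp}\,\mathbf t\,\{Q\}(\mathbf s):\iff\forall\mathbf v,\mathbf s'.\ (\mathbf t,\mathbf s\Downarrow\mathbf v,\mathbf s')\Rightarrow Q(\mathbf s')$ for a hyper-assertion $Q$. $\vec x(i)=\vec x(j)$ is the hyper-assertion $\forall k.\ \mathbf s(i)(x_k)=\mathbf s(j)(x_k)$. *)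

From Stdlib Require Import ZArith List.
Import ListNotations.
Open Scope Z_scope.

Definition Val := Z.
Definition PVar := nat.
Definition Store := PVar -> Val.
Definition Idx := nat.

Definition upd (s : Store) (x : PVar) (v : Val) : Store :=
  fun y => if Nat.eqb y x then v else s y.

Inductive binop := OAdd | OSub | OMul | OLt | OEq.

Definition eval_op (o : binop) (a b : Z) : Z :=
  match o with
  | OAdd => a + b
  | OSub => a - b
  | OMul => a * b
  | OLt => if Z.ltb a b then 1 else 0
  | OEq => if Z.eqb a b then 1 else 0
  end.

Inductive term :=
  | TVal (v : Val)
  | TVar (x : PVar)
  | TStar
  | TOp (o : binop) (t1 t2 : term)
  | TSkip
  | TAssign (x : PVar) (t : term)
  | TSeq (t1 t2 : term)
  | TIf (c t1 t2 : term)
  | TWhile (c b : term).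

(* nondeterministic big-step semantics t, s ⇓ v, s'.
   Conventions: skip and a terminated while return 0; x := t returns the value
   assigned; a condition is true iff its value is nonzero. *)
Inductive bigstep : term -> Store -> Val -> Store -> Prop :=
  | BVal v s : bigstep (TVal v) s v s
  | BVar x s : bigstep (TVar x) s (s x) s
  | BStar v s : bigstep TStar s v s
  | BOp o t1 t2 s s1 s2 v1 v2 :
      bigstep t1 s v1 s1 -> bigstep t2 s1 v2 s2 ->
      bigstep (TOp o t1 t2) s (eval_op o v1 v2) s2
  | BSkip s : bigstep TSkip s 0 s
  | BAssign x t s v s' :
      bigstep t s v s' -> bigstep (TAssign x t) s v (upd s' x v)
  | BSeq t1 t2 s s1 s2 v1 v2 :
      bigstep t1 s v1 s1 -> bigstep t2 s1 v2 s2 -> bigstep (TSeq t1 t2) s v2 s2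
  | BIfT c t1 t2 s s1 vc v s2 :
      bigstep c s vc s1 -> vc <> 0 -> bigstep t1 s1 v s2 ->
      bigstep (TIf c t1 t2) s v s2
  | BIfF c t1 t2 s s1 v s2 :
      bigstep c s 0 s1 -> bigstep t2 s1 v s2 ->
      bigstep (TIf c t1 t2) s v s2
  | BWhileF c b s s1 :
      bigstep c s 0 s1 -> bigstep (TWhile c b) s 0 s1
  | BWhileT c b s s1 vc vb s2 v s3 :
      bigstep c s vc s1 -> vc <> 0 -> bigstep b s1 vb s2 ->
      bigstep (TWhile c b) s2 v s3 -> bigstep (TWhile c b) s v s3.

(* hyper-terms: partial maps Idx -> term (only finitely supported ones are used) *)
Definition HTerm := Idx -> option term.
Definition HStore := Idx -> Store.
Definition HVal := Idx -> Val.
Definition HAssertion := HStore -> Prop.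

Definition hterm2 (i1 : Idx) (t1 : term) (i2 : Idx) (t2 : term) : HTerm :=
  fun i => if Nat.eqb i i1 then Some t1 else if Nat.eqb i i2 then Some t2 else None.

Definition hbigstep (ht : HTerm) (hs : HStore) (hv : HVal) (hs' : HStore) : Prop :=
  forall i, match ht i with
            | Some ti => bigstep ti (hs i) (hv i) (hs' i)
            | None => hs' i = hs i
            end.

Definition entails (P R : HAssertion) : Prop := forall hs, P hs -> R hs.

Definition wp (ht : HTerm) (Q : HAssertion) : HAssertion :=
  fun hs => forall hv hs', hbigstep ht hs hv hs' -> Q hs'.

Definition vec_eq (xs : list PVar) (i j : Idx) : HAssertion :=
  fun hs => forall k, In k xs -> hs i k = hs j k.

Definition projectable (t : term) : Prop :=
  forall s, exists v s', bigstep t s v s'.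

(* Relationally, the hypothesis says: whenever s1 and s2 agree on x, a run of t
   from s1 and a run of t;t from s2 end in stores that agree on x.  Given runs of
   t from s1 and s2 ending in s1' and s2', projectability lets us extend the
   second one by a further run of t to some c.  Applying the hypothesis to the
   pairs (s1, s2) and (s2, s2) gives s1' ~ c and s2' ~ c, hence s1' ~ s2'.
   Without projectability, take t = (while x1 do skip); x1 := 1; x0 := *:
   t;t never terminates, so the hypothesis holds vacuously, while two runs of t
   from the same store may assign different values to x0. *)

From Stdlib Require Import ZArith List Lia.
Import ListNotations.

Definition agree (xs : list PVar) (s1 s2 : Store) : Prop :=
  forall k, In k xs -> s1 k = s2 k.

Lemma agree_refl xs s : agree xs s s.
Proof. intros k _; reflexivity. Qed.

Lemma agree_sym xs s1 s2 : agree xs s1 s2 -> agree xs s2 s1.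
Proof. intros H k Hk; symmetry; auto. Qed.

Lemma agree_trans xs s1 s2 s3 : agree xs s1 s2 -> agree xs s2 s3 -> agree xs s1 s3.
Proof. intros H12 H23 k Hk; rewrite H12, H23; auto. Qed.

Definition agree_preserving (xs : list PVar) (t1 t2 : term) : Prop :=
  forall s1 s2 v1 v2 s1' s2',
    agree xs s1 s2 -> bigstep t1 s1 v1 s1' -> bigstep t2 s2 v2 s2' -> agree xs s1' s2'.

Lemma hbigstep_hterm2_iff (i j : Idx) t1 t2 hs hv hs' :
  i <> j ->
  hbigstep (hterm2 i t1 j t2) hs hv hs' <->
  bigstep t1 (hs i) (hv i) (hs' i) /\ bigstep t2 (hs j) (hv j) (hs' j) /\
  (forall k, k <> i -> k <> j -> hs' k = hs k).
Proof.
  intros Hij. unfold hbigstep, hterm2. split.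
  - intros H. pose proof (H i) as Hi. pose proof (H j) as Hj.
    rewrite Nat.eqb_refl in Hi. rewrite (proj2 (Nat.eqb_neq j i)), Nat.eqb_refl in Hj by auto.
    repeat split; auto.
    intros k Hki Hkj. specialize (H k).
    rewrite (proj2 (Nat.eqb_neq k i)), (proj2 (Nat.eqb_neq k j)) in H; auto.
  - intros (Hi & Hj & Hk) k.
    destruct (Nat.eqb_spec k i) as [-> | Hki]; auto.
    destruct (Nat.eqb_spec k j) as [-> | Hkj]; auto.
Qed.

Lemma entails_wp_hterm2_iff (i j : Idx) xs t1 t2 :
  i <> j ->
  entails (vec_eq xs i j) (wp (hterm2 i t1 j t2) (vec_eq xs i j)) <->
  agree_preserving xs t1 t2.
Proof.
  intros Hij. assert (Hji : Nat.eqb j i = false) by (apply Nat.eqb_neq; auto).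
  split.
  - intros H s1 s2 v1 v2 s1' s2' Hs H1 H2.
    set (hs := fun k => if Nat.eqb k i then s1 else s2).
    set (hv := fun k => if Nat.eqb k i then v1 else v2).
    set (hs' := fun k => if Nat.eqb k i then s1' else if Nat.eqb k j then s2' else s2).
    assert (Hrun : hbigstep (hterm2 i t1 j t2) hs hv hs').
    { apply hbigstep_hterm2_iff; auto.
      unfold hs, hv, hs'. rewrite Nat.eqb_refl, Hji, Nat.eqb_refl.
      repeat split; auto.
      intros k Hki Hkj.
      rewrite (proj2 (Nat.eqb_neq k i)), (proj2 (Nat.eqb_neq k j)); auto. }
    assert (Hpre : vec_eq xs i j hs).
    { unfold vec_eq, hs. rewrite Nat.eqb_refl, Hji. exact Hs. }
    pose proof (H hs Hpre hv hs' Hrun) as Hpost.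
    unfold vec_eq, hs' in Hpost. rewrite Nat.eqb_refl, Hji, Nat.eqb_refl in Hpost.
    exact Hpost.
  - intros H hs Hs hv hs' Hrun.
    apply hbigstep_hterm2_iff in Hrun as (H1 & H2 & _); auto.
    exact (H _ _ _ _ _ _ Hs H1 H2).
Qed.

Theorem agree_preserving_of_seq_self xs t :
  projectable t -> agree_preserving xs t (TSeq t t) -> agree_preserving xs t t.
Proof.
  intros Hproj Hseq s1 s2 v1 v2 s1' s2' Hs H1 H2.
  destruct (Hproj s2') as (v & c & Hc).
  assert (Hs2 : bigstep (TSeq t t) s2 v c) by (econstructor; eauto).
  apply agree_trans with c.
  - exact (Hseq _ _ _ _ _ _ Hs H1 Hs2).
  - apply agree_sym, (Hseq _ _ _ _ _ _ (agree_refl xs s2) H2 Hs2).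
Qed.

Lemma agree_preserving_of_diverges xs t1 t2 :
  (forall s v s', ~ bigstep t2 s v s') -> agree_preserving xs t1 t2.
Proof. intros Hdiv s1 s2 v1 v2 s1' s2' _ _ H2. exfalso; exact (Hdiv _ _ _ H2). Qed.

Definition assume_zero (x : PVar) : term := TWhile (TVar x) TSkip.

Lemma bigstep_assume_zero x s v s' :
  bigstep (assume_zero x) s v s' -> s x = 0 /\ s' = s.
Proof.
  unfold assume_zero. remember (TWhile (TVar x) TSkip) as w eqn:Ew.
  intros H; induction H; inversion Ew; subst.
  - inversion H; subst; auto.
  - inversion H; subst. inversion H1; subst.
    destruct (IHbigstep3 eq_refl); contradiction.
Qed.

Definition havoc_once : term :=
  TSeq (assume_zero 1%nat) (TSeq (TAssign 1%nat (TVal 1)) (TAssign 0%nat TStar)).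

Lemma bigstep_havoc_once s v s' :
  bigstep havoc_once s v s' -> s 1%nat = 0 /\ s' 1%nat = 1.
Proof.
  intros H. inversion H as [| | | | | | ? ? ? s1 ? ? ? Hw Hrest | | | |]; subst.
  apply bigstep_assume_zero in Hw as [Hz ->]. split; [exact Hz |].
  inversion Hrest as [| | | | | | ? ? ? s2 ? ? ? Hset Hhavoc | | | |]; subst.
  inversion Hset as [| | | | | ? ? ? ? ? Hval | | | | |]; subst.
  inversion Hhavoc as [| | | | | ? ? ? ? ? Hstar | | | | |]; subst.
  inversion Hval; subst. inversion Hstar; subst. reflexivity.
Qed.

Lemma havoc_once_twice_diverges s v s' : ~ bigstep (TSeq havoc_once havoc_once) s v s'.
Proof.
  intros H. inversion H as [| | | | | | ? ? ? s1 ? ? ? H1 H2 | | | |]; subst.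
  apply bigstep_havoc_once in H1 as [_ Hone]. apply bigstep_havoc_once in H2 as [Hzero _].
  lia.
Qed.

Lemma bigstep_havoc_once_zero z :
  bigstep havoc_once (fun _ => 0) z (upd (upd (fun _ => 0) 1%nat 1) 0%nat z).
Proof.
  econstructor.
  - apply BWhileF, (BVar 1%nat (fun _ => 0)).
  - econstructor; repeat constructor.
Qed.

Lemma not_agree_preserving_havoc_once : ~ agree_preserving [0%nat] havoc_once havoc_once.
Proof.
  intros H.
  specialize (H _ _ _ _ _ _ (agree_refl _ _)
                (bigstep_havoc_once_zero 1) (bigstep_havoc_once_zero 2) 0%nat (or_introl eq_refl)).
  discriminate.
Qed.

Theorem mainTheorem20 :
  (forall (t : term) (xs : list PVar),
      NoDup xs ->
      entails (vec_eq xs 1%nat 2%nat) (wp (hterm2 1%nat t 2%nat (TSeq t t)) (vec_eq xs 1%nat 2%nat)) ->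
      projectable t ->
      entails (vec_eq xs 1%nat 2%nat) (wp (hterm2 1%nat t 2%nat t) (vec_eq xs 1%nat 2%nat)))
  /\
  (exists (t : term) (xs : list PVar),
      NoDup xs /\
      entails (vec_eq xs 1%nat 2%nat) (wp (hterm2 1%nat t 2%nat (TSeq t t)) (vec_eq xs 1%nat 2%nat)) /\
      ~ entails (vec_eq xs 1%nat 2%nat) (wp (hterm2 1%nat t 2%nat t) (vec_eq xs 1%nat 2%nat))).
Proof.
  split.
  - intros t xs _ Hseq Hproj.
    apply entails_wp_hterm2_iff in Hseq; [| discriminate].
    apply entails_wp_hterm2_iff; [discriminate |].
    exact (agree_preserving_of_seq_self xs t Hproj Hseq).
  - exists havoc_once, [0%nat].
    repeat split.
    + repeat constructor; simpl; tauto.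
    + apply entails_wp_hterm2_iff; [discriminate |].
      apply agree_preserving_of_diverges, havoc_once_twice_diverges.
    + rewrite entails_wp_hterm2_iff by discriminate.
      exact not_agree_preserving_havoc_once.
Qed.
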